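(* Let $(X,\mathcal{A},\mu)$ be a probability space, $\theta$ a measure-preserving endomorphism, $\varphi$ a bounded ceiling function and $(\overline{X},\overline{\mu},(\Phi_t))$ the associated special flow. Let $A\subset X$ be a hole such that the escape rate $\rho(A,\varphi)$ exists. Then \[\rho(A,\varphi)=\lim_{t\to\infty}-\frac1t\log\overline{\mu}\big(\{(x,s)\in\overline{X}:N_A(x)\ge N_t^\varphi(x)\}\big)=\lim_{t\to\infty}-\frac1t\log\mu\big(\{x\in X:N_A(x)\ge N_t^\varphi(x)\}\big).\]
   Context: A ceiling function is a measurable $\varphi:X\to\mathbb{R}$ with $\inf\varphi>0$. $S_n\varphi=\sum_{k=0}^{n-1}\varphi\circ\theta^k$, $N_t^\varphi(x)=\min\{n\in\mathbb{N}_0:S_n\varphi(x)>t\}$ for $t\ge0$, and $N_A(x)=\min\{n\in\mathbb{N}_0:\theta^n(x)\in A\}$. Special flow: $\overline{X}=\{(x,s):0\le s<\varphi(x)\}$, $\overline{\mu}$ the restriction of $\mu\otimes$Lebesgue; $\Phi_t(x,s)=(x,s+t)$ if $t<\varphi(x)-s$, otherwise $\Phi_t(x,s)=(\theta^{N-1}x,s+t-S_{N-1}\varphi(x))$ with $N=N^\varphi_{s+t}(x)$. $\pi_1$ is the projection to $X$. A hole $A\subset X$ is a measurable set with $\bigcup_{n\ge0}\theta^{-n}(A)=X$ up to a $\mu$-null set. The escape rate $\rho(A,\varphi)$ is $\lim_{t\to\infty}-\frac1t\log\overline{\mu}(\{(x,s):\forall\tau\in[0,t]:\Phi_\tau(x,s)\notin\pi_1^{-1}(A)\})$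 when this limit exists. *)

From HB Require Import structures.
From mathcomp Require Import all_boot all_order all_algebra.
From mathcomp Require Import all_classical all_reals all_analysis.
Set Implicit Arguments. Unset Strict Implicit. Unset Printing Implicit Defensive.
Import Order.TTheory GRing.Theory Num.Theory.
Local Open Scope classical_set_scope.
Local Open Scope ring_scope.

(* The least natural number satisfying P, or 0 if there is none (junk). *)
Definition least_nat (P : nat -> Prop) : nat :=
  match pselect (exists n, P n) with
  | left h => @ex_minn (fun n => `[< P n >]) (let: ex_intro n Hn := h in
                        ex_intro _ n (asboolT Hn))
  | right _ => 0%N
  end.

Section SpecialFlow.
Context {d : measure_display} {X : measurableType d} {R : realType}.

Definition birkhoff (theta : X -> X) (phi : X -> R) (n : nat) (x : X) : R :=
  \sum_(k < n) phi (iter k theta x).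

Definition Nphi (theta : X -> X) (phi : X -> R) (t : R) (x : X) : nat :=
  least_nat (fun n => t < birkhoff theta phi n x).

Definition NA (theta : X -> X) (A : set X) (x : X) : \bar R :=
  if `[< exists n, A (iter n theta x) >]
  then ((least_nat (fun n => A (iter n theta x)))%:R)%:E
  else +oo%E.

Definition Xbar (phi : X -> R) : set (X * R) :=
  [set p | 0 <= p.2 /\ p.2 < phi p.1].

Definition sflow (theta : X -> X) (phi : X -> R) (t : R) (p : X * R) : X * R :=
  let: (x, s) := p in
  if t < phi x - s then (x, s + t)
  else let N := Nphi theta phi (s + t) x in
       (iter N.-1 theta x, s + t - birkhoff theta phi N.-1 x).

Definition mubar (mu : set X -> \bar R) (phi : X -> R) (B : set (X * R)) : \bar R :=
  (mu \x (@lebesgue_measure R))%E (B `&` Xbar phi).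

Definition survivor (theta : X -> X) (phi : X -> R) (A : set X) (t : R)
  : set (X * R) :=
  [set p | Xbar phi p /\ forall tau, 0 <= tau <= t -> ~ A (sflow theta phi tau p).1].

(* the function t |-> -(1/t) log m(t), with the convention -log 0 = +oo *)
Definition neglograte (m : R -> \bar R) (t : R) : \bar R :=
  if m t == 0%E then +oo%E else (- (ln (fine (m t)) / t))%:E.

Definition is_hole (mu : set X -> \bar R) (theta : X -> X) (A : set X) : Prop :=
  measurable A /\ mu (~` \bigcup_n ((iter n theta) @^-1` A)) = 0%E.

Definition measure_preserving (mu : set X -> \bar R) (theta : X -> X) : Prop :=
  measurable_fun setT theta /\
  forall B, measurable B -> mu (theta @^-1` B) = mu B.

Definition ceiling_function (phi : X -> R) : Prop :=
  measurable_fun setT phi /\ exists c : R, 0 < c /\ forall x, c <= phi x.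

End SpecialFlow.

From HB Require Import structures.
From mathcomp Require Import all_boot all_order all_algebra.
From mathcomp Require Import all_classical all_reals all_analysis.
From mathcomp Require Import measurable_realfun ring.
Import Order.TTheory GRing.Theory Num.Theory.
Import numFieldNormedType.Exports.
Local Open Scope classical_set_scope.
Local Open Scope ring_scope.

(* Let G_t be the set of x whose orbit avoids A at every time n with
   S_n phi(x) <= t; it is exactly {N_A >= N_t^phi}.  A point (x, s) of the
   suspension that survives up to time t lies over G_t, and conversely every
   point over G_(t+M), M = sup phi, survives up to time t, because before time
   t the flow only visits points theta^n x with S_n phi(x) <= s + t < t + M.
   Since the mass of the cylinder over G is between (inf phi) mu(G) and
   M mu(G), the three quantities are squeezed between constant multiples of
   one another up to the time shift M, and neither constants nor a bounded
   shift change an exponential rate. *)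

Lemma least_natP (P : nat -> Prop) : (exists n, P n) ->
  P (least_nat P) /\ forall m, P m -> (least_nat P <= m)%N.
Proof.
move=> ex; rewrite /least_nat; case: pselect => // exP.
case: (ex_minnP _) => n /asboolP Pn n_min; split => // m Pm.
exact/n_min/asboolP.
Qed.

Section BirkhoffSums.
Context {d : measure_display} {X : measurableType d} {R : realType}.
Variable theta : X -> X.
Context {phi : X -> R}.

Lemma birkhoff0 x : birkhoff theta phi 0 x = 0.
Proof. by rewrite /birkhoff big_ord0. Qed.

Lemma birkhoffS n x :
  birkhoff theta phi n.+1 x = birkhoff theta phi n x + phi (iter n theta x).
Proof. by rewrite /birkhoff big_ord_recr. Qed.

Lemma birkhoff1 x : birkhoff theta phi 1 x = phi x.
Proof. by rewrite birkhoffS birkhoff0 add0r. Qed.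

Lemma le_birkhoff (phi_ge0 : forall x, 0 <= phi x) m n x :
  (m <= n)%N -> birkhoff theta phi m x <= birkhoff theta phi n x.
Proof.
elim: n => [|n IHn]; first by rewrite leqn0 => /eqP ->.
rewrite leq_eqVlt => /predU1P[-> //|/IHn le_mn].
by rewrite birkhoffS (le_trans le_mn) // lerDl.
Qed.

Lemma lt_birkhoff (phi_gt0 : forall x, 0 < phi x) m n x :
  (m < n)%N -> birkhoff theta phi m x < birkhoff theta phi n x.
Proof.
move=> lt_mn; have phi_ge0 y : 0 <= phi y by exact/ltW.
by apply: lt_le_trans (le_birkhoff phi_ge0 _ _ x lt_mn); rewrite birkhoffS ltrDl.
Qed.

Context {c : R}.
Hypothesis c_gt0 : 0 < c.
Hypothesis phi_ge_c : forall x, c <= phi x.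

Let phi_gt0 x : 0 < phi x. Proof. exact: lt_le_trans c_gt0 (phi_ge_c x). Qed.

Lemma birkhoff_ge n x : n%:R * c <= birkhoff theta phi n x.
Proof.
elim: n => [|n IHn]; first by rewrite birkhoff0 mul0r.
by rewrite birkhoffS -nat1r mulrDl mul1r addrC lerD.
Qed.

Lemma birkhoff_unbounded t x : exists n, t < birkhoff theta phi n x.
Proof.
exists (Num.trunc (`|t| / c)).+1; apply: lt_le_trans (birkhoff_ge _ x).
rewrite -ltr_pdivrMr //; apply: (le_lt_trans (y := `|t| / c)).
  by rewrite ler_pM2r ?invr_gt0 // ler_norm.
by rewrite truncnS_gt // divr_ge0 // ltW.
Qed.

Lemma NphiP t x : t < birkhoff theta phi (Nphi theta phi t x) x /\
  forall m, t < birkhoff theta phi m x -> (Nphi theta phi t x <= m)%N.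
Proof. exact: least_natP (birkhoff_unbounded t x). Qed.

Lemma Nphi_birkhoff n x : Nphi theta phi (birkhoff theta phi n x) x = n.+1.
Proof.
have [lt_N N_min] := NphiP (birkhoff theta phi n x) x.
apply/eqP; rewrite eqn_leq N_min ?lt_birkhoff //= ltnNge.
by apply: contraTN lt_N => /(le_birkhoff (fun y => ltW (phi_gt0 y)) _ _ x); rewrite leNgt.
Qed.

End BirkhoffSums.

Section SpecialFlowOrbits.
Context {d : measure_display} {X : measurableType d} {R : realType}.
Variables (theta : X -> X) (phi : X -> R).
Context {c : R}.
Hypothesis c_gt0 : 0 < c.
Hypothesis phi_ge_c : forall x, c <= phi x.

Let phi_ge0 x : 0 <= phi x. Proof. exact: le_trans (ltW c_gt0) (phi_ge_c x). Qed.

Lemma sflow_fst_orbit x {s tau : R} : 0 <= s -> 0 <= tau ->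
  exists2 k, (sflow theta phi tau (x, s)).1 = iter k theta x &
             birkhoff theta phi k x <= s + tau.
Proof.
move=> s_ge0 tau_ge0; rewrite /sflow; case: ifP => _ /=.
  by exists 0%N; rewrite // birkhoff0 addr_ge0.
set N := Nphi theta phi (s + tau) x; exists N.-1 => //.
have [_ N_min] := NphiP theta c_gt0 phi_ge_c (s + tau) x.
have [-> |N_gt0] := posnP N; first by rewrite birkhoff0 addr_ge0.
by rewrite leNgt; apply/negP => /N_min; rewrite leqNgt ltn_predL N_gt0.
Qed.

Lemma sflow_return n x s : s < phi x ->
  sflow theta phi (birkhoff theta phi n.+1 x - s) (x, s) = (iter n.+1 theta x, 0).
Proof.
move=> s_lt_phi; rewrite /sflow ltrBlDr subrK addrC subrK.
rewrite (Nphi_birkhoff theta c_gt0 phi_ge_c) subrr ltNge.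
by rewrite -[X in X <= _](birkhoff1 theta) (le_birkhoff theta phi_ge0).
Qed.

Variable A : set X.

Definition avoids_until (t : R) : set X :=
  [set x | forall n, birkhoff theta phi n x <= t -> ~ A (iter n theta x)].

Lemma Nphi_le_NA t x :
  ((Nphi theta phi t x)%:R%:E <= NA (R:=R) theta A x)%E <-> avoids_until t x.
Proof.
have [lt_N N_min] := NphiP theta c_gt0 phi_ge_c t x.
rewrite /NA; case: asboolP => [hitA|nohitA]; last first.
  by split => [_ n _ An|_]; [apply: nohitA; exists n | exact: leey].
have [A_L L_min] := least_natP _ hitA.
rewrite lee_fin ler_nat; split => [le_NL n le_Sn_t An|avoid].
  have := lt_le_trans lt_N (le_birkhoff theta phi_ge0 _ _ x (leq_trans le_NL (L_min n An))).
  by rewrite ltNge le_Sn_t.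
by apply: N_min; rewrite ltNge; apply/negP => /avoid; apply.
Qed.

Lemma Nphi_le_NA_set t :
  [set x | ((Nphi theta phi t x)%:R%:E <= NA (R:=R) theta A x)%E] = avoids_until t.
Proof. by apply/seteqP; split => x /Nphi_le_NA. Qed.

Lemma Nphi_le_NA_cylinder t :
  [set p : X * R | ((Nphi theta phi t p.1)%:R%:E <= NA (R:=R) theta A p.1)%E] =
  [set p | avoids_until t p.1].
Proof. by apply/seteqP; split => p /Nphi_le_NA. Qed.

Lemma survivor_avoids t :
  survivor theta phi A t `<=` [set p | avoids_until t p.1].
Proof.
move=> [x s] [[s_ge0 s_lt_phi] surv] [|n] le_Sn_t An;
  rewrite /= in s_ge0 s_lt_phi le_Sn_t.
  rewrite (birkhoff0 theta) in le_Sn_t; apply: (surv 0); first by rewrite lexx le_Sn_t.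
  by rewrite /sflow subr_gt0 s_lt_phi.
have phi_le_S : phi x <= birkhoff theta phi n.+1 x.
  by rewrite -(birkhoff1 theta) (le_birkhoff theta phi_ge0).
apply: (surv (birkhoff theta phi n.+1 x - s)).
  by rewrite subr_ge0 (le_trans (ltW s_lt_phi)) //= (le_trans _ le_Sn_t) // lerBlDr lerDl.
by rewrite sflow_return.
Qed.

Lemma avoids_survivor M t : (forall x, phi x <= M) ->
  Xbar phi `&` [set p | avoids_until (t + M) p.1] `<=` survivor theta phi A t.
Proof.
move=> phi_le_M [x s] [[/= s_ge0 s_lt_phi] avoid]; split => // tau /andP[tau_ge0 tau_le_t].
have [k -> le_Sk] := sflow_fst_orbit x s_ge0 tau_ge0.
apply: avoid; rewrite (le_trans le_Sk) // addrC lerD //.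
exact/ltW/(lt_le_trans s_lt_phi (phi_le_M x)).
Qed.

End SpecialFlowOrbits.

Section Measurability.
Context {d : measure_display} {X : measurableType d} {R : realType}.
Variables (theta : X -> X) (phi : X -> R).
Hypothesis mtheta : measurable_fun setT theta.
Hypothesis mphi : measurable_fun setT phi.

Lemma measurable_iter n : measurable_fun setT (iter n theta).
Proof. by elim: n => [|n IHn] /=; [exact: measurable_id | exact: measurableT_comp]. Qed.

Lemma measurable_birkhoff n : measurable_fun setT (birkhoff theta phi n).
Proof.
elim: n => [|n IHn].
  by rewrite (_ : birkhoff theta phi 0 = cst 0) //; apply/funext => x; rewrite birkhoff0.
rewrite (_ : birkhoff theta phi n.+1 = birkhoff theta phi n \+ (phi \o iter n theta)).
  by apply: measurable_funD => //; exact: measurableT_comp (measurable_iter n).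
by apply/funext => x; rewrite birkhoffS.
Qed.

Lemma measurable_avoids_until (A : set X) t : measurable A ->
  measurable (avoids_until theta phi A t).
Proof.
move=> mA; rewrite (_ : avoids_until theta phi A t = \bigcap_n
    (birkhoff theta phi n @^-1` `]t, +oo[ `|` iter n theta @^-1` (~` A))).
  apply: bigcapT_measurable => n; apply: measurableU.
    by rewrite -[X in measurable X]setTI; apply: measurable_birkhoff => //; exact: measurable_itv.
  by rewrite -[X in measurable X]setTI; apply: measurable_iter => //; exact: measurableC.
apply/seteqP; split => x /= avoid n.
  move=> _; have [lt_t_Sn|/avoid] := ltP t (birkhoff theta phi n x); last by right.
  by left; rewrite /= in_itv /= andbT.
move=> le_Sn_t; case: (avoid n I) => //=.
by rewrite in_itv /= andbT ltNge le_Sn_t.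
Qed.

End Measurability.

Section SuspensionMeasure.
Context {d : measure_display} {X : measurableType d} {R : realType}.
Variables (mu : {measure set X -> \bar R}) (phi : X -> R).

Lemma le_mubar B B' : B `&` Xbar phi `<=` B' -> (mubar mu phi B <= mubar mu phi B')%E.
Proof.
move=> BB'; rewrite /mubar /product_measure1 !ge0_integralTE //.
apply: le_ereal_sup => _ [h h_le <-]; exists h => //= x.
apply: le_trans (h_le x) _; apply: le_mu_ext => y.
by rewrite /xsection /= !inE => -[? ?]; split => //; exact: BB'.
Qed.

Hypothesis mphi : measurable_fun setT phi.
Hypothesis phi_ge0 : forall x, 0 <= phi x.

Lemma mubar_cylinder (S : set X) :
  mubar mu phi [set p | S p.1] = (\int[mu]_x (phi x * \1_S x)%:E)%E.
Proof.
rewrite /mubar /product_measure1; apply: eq_integral => x _ /=.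
have [Sx|nSx] := pselect (S x); last first.
  rewrite indicE memNset // mulr0 (_ : xsection _ x = set0) ?measure0 //.
  by apply/seteqP; split => y; rewrite /xsection /= inE // => -[].
rewrite indicE mem_set // mulr1.
rewrite (_ : xsection _ x = [set` `[0, phi x[%R]).
  rewrite lebesgue_measure_itv /= lte_fin; case: ltP => [_|phi_le0].
    by rewrite oppr0 adde0.
  by apply/eqP; rewrite eq_sym eqe eq_le phi_le0 phi_ge0.
apply/seteqP; split => y; rewrite /xsection /= inE /= in_itv /=.
  by move=> [_ [y_ge0 y_lt_phi]]; rewrite y_ge0 y_lt_phi.
by move=> /andP[y_ge0 y_lt_phi].
Qed.

Lemma mubar_cylinder_bounds (S : set X) (c M : R) : measurable S -> 0 <= c ->
  (forall x, c <= phi x) -> (forall x, phi x <= M) ->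
  (c%:E * mu S <= mubar mu phi [set p | S p.1] <= M%:E * mu S)%E.
Proof.
move=> mS c_ge0 phi_ge_c phi_le_M; rewrite mubar_cylinder.
have int_cst k : 0 <= k -> (\int[mu]_x (k * \1_S x)%:E = k%:E * mu S)%E.
  move=> k_ge0; under eq_integral do rewrite EFinM.
  rewrite ge0_integralZl_EFin // ?integral_indic ?setIT //.
  exact/measurable_EFinP/measurable_indic.
have mS1 (h : X -> R) : measurable_fun setT h ->
    measurable_fun setT (fun x => (h x * \1_S x)%:E).
  by move=> mh; apply/measurable_EFinP/measurable_funM => //; exact: measurable_indic.
have le_int (f g : X -> R) : measurable_fun setT f -> measurable_fun setT g ->
    (forall x, 0 <= f x) -> (forall x, f x <= g x) ->
    (\int[mu]_x (f x * \1_S x)%:E <= \int[mu]_x (g x * \1_S x)%:E)%E.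
  move=> mf mg f_ge0 f_le_g; apply: ge0_le_integral (mS1 _ mf) (mS1 _ mg) _ => //.
    by move=> x _; rewrite lee_fin mulr_ge0.
  by move=> x _; rewrite lee_fin ler_wpM2r.
apply/andP; split.
  by rewrite -int_cst //; apply: (le_int (cst c)) => //; exact: measurable_cst.
rewrite -int_cst; last exact: le_trans c_ge0 (le_trans (phi_ge_c point) (phi_le_M point)).
by apply: le_int => //; exact: measurable_cst.
Qed.

End SuspensionMeasure.

Section EscapeRates.
Context {R : realType}.
Implicit Types (f g : R -> \bar R) (rho : R).

Lemma cvg_divy0 (k : R) : k / t @[t --> +oo] --> 0.
Proof.
have inv_cvg0 : t^-1 @[t --> +oo] --> (0 : R).
  by apply/(gtr0_cvgV0 (nbhs_pinfty_gt (num_real 0))); exact: cvg_id.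
by rewrite -(mulr0 k); exact: cvgM (cvg_cst k) inv_cvg0.
Qed.

Lemma le_neglograte f g t : 0 < t -> (0 <= f t)%E -> (f t <= g t)%E ->
  g t \is a fin_num -> (neglograte g t <= neglograte f t)%E.
Proof.
move=> t_gt0 f_ge0 f_le_g g_fin; rewrite /neglograte.
have [_|f_neq0] := eqVneq (f t) 0%E; first exact: leey.
have f_gt0 : (0 < f t)%E by rewrite lt_def f_neq0.
have f_fin : f t \is a fin_num.
  by rewrite ge0_fin_numE // (le_lt_trans f_le_g) // ltey_eq g_fin.
have fine_le_fg : fine (f t) <= fine (g t) by exact: fine_le.
have fine_f_gt0 : 0 < fine (f t) by rewrite fine_gt0 // f_gt0 ltey_eq f_fin.
rewrite gt_eqF ?(lt_le_trans f_gt0) // lee_fin lerN2 ler_pM2r ?invr_gt0 //.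
by rewrite ler_ln ?posrE // (lt_le_trans fine_f_gt0).
Qed.

Lemma EFin_near_cvg (T : Type) (F : set_system T) (FF : Filter F)
    (u : T -> \bar R) (h : T -> R) (l : R) :
  (\forall x \near F, u x = (h x)%:E) -> h x @[x --> F] --> l -> u x @[x --> F] --> l%:E.
Proof.
move=> u_eq h_cvg; apply/fine_cvgP; split; first by apply: filterS u_eq => x ->.
by apply: cvg_trans (near_eq_cvg _) h_cvg; apply: filterS u_eq => x /= ->.
Qed.

Lemma neglograte_scale f k rho : 0 < k -> (forall t, 0 <= f t)%E ->
  (forall t, f t \is a fin_num) -> neglograte f t @[t --> +oo] --> rho%:E ->
  neglograte (fun t => k%:E * f t)%E t @[t --> +oo] --> rho%:E.
Proof.
move=> k_gt0 f_ge0 f_fin /fine_cvgP[rate_fin rate_cvg].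
apply: (@EFin_near_cvg _ _ _ _ (fun t => fine (neglograte f t) - ln k / t)).
  apply: filterS rate_fin => t; rewrite /neglograte.
  have [//|f_neq0 _] := eqVneq (f t) 0%E.
  have f_gt0 : 0 < fine (f t) by rewrite fine_gt0 // lt_def f_neq0 f_ge0 ltey_eq f_fin.
  rewrite -[f t]fineK // -EFinM eqe gt_eqF ?mulr_gt0 //=.
  by rewrite lnM ?posrE // mulrDl opprD addrC.
by rewrite -[rho]subr0; exact: cvgB rate_cvg (cvg_divy0 (ln k)).
Qed.

Lemma neglograte_shift f M rho : neglograte f t @[t --> +oo] --> rho%:E ->
  neglograte (fun t => f (t - M)) t @[t --> +oo] --> rho%:E.
Proof.
rewrite -(cvg_centerr M) => /fine_cvgP[rate_fin rate_cvg].
apply: (@EFin_near_cvg _ _ _ _ (fun t => (1 - M / t) * fine (neglograte f (t - M)))).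
  near=> t.
  have t_gt0 : 0 < t by near: t; apply: nbhs_pinfty_gt; exact: num_real.
  have t_gt_M : M < t by near: t; apply: nbhs_pinfty_gt; exact: num_real.
  have : neglograte f (t - M) \is a fin_num by near: t.
  rewrite /neglograte; case: ifP => //= _ _; congr EFin.
  by field; rewrite !gt_eqF ?subr_gt0.
have one_cvg : (1 - M / t) @[t --> +oo] --> (1 : R).
  by rewrite -[X in _ --> X]subr0; apply: cvgB; [exact: cvg_cst | exact: cvg_divy0].
by rewrite -[rho]mul1r; exact: cvgM one_cvg rate_cvg.
Unshelve. all: by end_near.
Qed.

Lemma neglograte_squeeze f g (a b M rho : R) : 0 < a -> 0 < b ->
  (forall t, 0 <= f t)%E -> (forall t, f t \is a fin_num) ->
  (forall t, a%:E * f t <= g t)%E -> (forall t, g t <= b%:E * f (t - M)%R)%E ->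
  neglograte f t @[t --> +oo] --> rho%:E -> neglograte g t @[t --> +oo] --> rho%:E.
Proof.
move=> a_gt0 b_gt0 f_ge0 f_fin af_le_g g_le_bf f_rate.
have af_ge0 t : (0 <= a%:E * f t)%E by rewrite mule_ge0 // lee_fin ltW.
have bf_fin t : (b%:E * f (t - M)%R)%E \is a fin_num by rewrite fin_numM.
have g_ge0 t : (0 <= g t)%E := le_trans (af_ge0 t) (af_le_g t).
have g_fin t : g t \is a fin_num.
  by rewrite ge0_fin_numE // (le_lt_trans (g_le_bf t)) // ltey_eq bf_fin.
have lower := neglograte_scale _ _ _ b_gt0 (fun t => f_ge0 _) (fun t => f_fin _)
  (neglograte_shift _ M _ f_rate).
have upper := neglograte_scale _ _ _ a_gt0 f_ge0 f_fin f_rate.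
apply: squeeze_cvge lower upper.
near=> t; have t_gt0 : 0 < t by near: t; apply: nbhs_pinfty_gt; exact: num_real.
by rewrite !le_neglograte.
Unshelve. all: by end_near.
Qed.

End EscapeRates.

Section SurvivorSandwich.
Context {d : measure_display} {X : measurableType d} {R : realType}.
Context {mu : probability X R} {theta : X -> X} {phi : X -> R} {A : set X} {c M : R}.
Hypotheses (mtheta : measurable_fun setT theta) (mphi : measurable_fun setT phi).
Hypothesis mA : measurable A.
Hypotheses (c_gt0 : 0 < c) (phi_ge_c : forall x, c <= phi x).
Hypothesis phi_le_M : forall x, phi x <= M.

Let phi_ge0 x : 0 <= phi x. Proof. exact: le_trans (ltW c_gt0) (phi_ge_c x). Qed.

Let M_gt0 : 0 < M.
Proof. exact: lt_le_trans c_gt0 (le_trans (phi_ge_c point) (phi_le_M point)). Qed.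

Let mG t : measurable (avoids_until theta phi A t).
Proof. exact: measurable_avoids_until. Qed.

Let cylinder_bounds t :=
  mubar_cylinder_bounds mu _ mphi phi_ge0 _ _ _ (mG t) (ltW c_gt0) phi_ge_c phi_le_M.

Lemma survivor_le_cylinder t : (mubar mu phi (survivor theta phi A t) <=
  mubar mu phi [set p | avoids_until theta phi A t p.1])%E.
Proof. by apply: le_mubar => p [/(survivor_avoids theta _ c_gt0 phi_ge_c)]. Qed.

Lemma cylinder_le_survivor t : (mubar mu phi [set p | avoids_until theta phi A t p.1] <=
  mubar mu phi (survivor theta phi A (t - M)))%E.
Proof.
apply: le_mubar => p [avoid Xp]; apply: (avoids_survivor theta _ c_gt0 phi_ge_c A _ _ phi_le_M).
by split; rewrite // subrK.
Qed.

Lemma survivor_mass_ge0 t : (0 <= mubar mu phi (survivor theta phi A t))%E.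
Proof. by apply: integral_ge0 => x _; exact: measure_ge0. Qed.

Lemma survivor_mass_fin t : mubar mu phi (survivor theta phi A t) \is a fin_num.
Proof.
rewrite ge0_fin_numE ?survivor_mass_ge0 // (le_lt_trans (survivor_le_cylinder t)) //.
apply: le_lt_trans (andP (cylinder_bounds t)).2 _; apply: le_lt_trans (ltry M).
rewrite -[leRHS]mule1; apply: lee_wpmul2l; first by rewrite lee_fin ltW.
exact: probability_le1.
Qed.

Lemma cylinder_escape_rate rho :
  neglograte (fun t => mubar mu phi (survivor theta phi A t)) t @[t --> +oo] --> rho%:E ->
  neglograte (fun t => mubar mu phi [set p | avoids_until theta phi A t p.1]) t
    @[t --> +oo] --> rho%:E.
Proof.
apply: (neglograte_squeeze _ _ 1 1 M _ ltr01 ltr01 survivor_mass_ge0 survivor_mass_fin).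
  by move=> t; rewrite mul1e survivor_le_cylinder.
by move=> t; rewrite mul1e cylinder_le_survivor.
Qed.

Lemma avoiders_escape_rate rho :
  neglograte (fun t => mubar mu phi (survivor theta phi A t)) t @[t --> +oo] --> rho%:E ->
  neglograte (fun t => mu (avoids_until theta phi A t)) t @[t --> +oo] --> rho%:E.
Proof.
apply: (neglograte_squeeze _ _ M^-1 c^-1 M _ _ _ survivor_mass_ge0 survivor_mass_fin).
- by rewrite invr_gt0.
- by rewrite invr_gt0.
- move=> t; rewrite lee_pdivrMl //.
  exact: le_trans (survivor_le_cylinder t) (andP (cylinder_bounds t)).2.
- move=> t; rewrite lee_pdivlMl //.
  exact: le_trans (andP (cylinder_bounds t)).1 (cylinder_le_survivor t).
Qed.

End SurvivorSandwich.

Theorem lemma3p10 (d : measure_display) (X : measurableType d) (R : realType)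
  (mu : probability X R) (theta : X -> X) (phi : X -> R) (A : set X) (rho : R) :
  measure_preserving mu theta ->
  ceiling_function phi ->
  (exists M : R, forall x, phi x <= M) ->
  is_hole mu theta A ->
  neglograte (fun t => mubar mu phi (survivor theta phi A t)) t
    @[t --> +oo] --> rho%:E ->
  neglograte (fun t => mubar mu phi
      [set p | ((Nphi theta phi t p.1)%:R%:E <= NA (R:=R) theta A p.1)%E]) t
    @[t --> +oo] --> rho%:E /\
  neglograte (fun t => mu
      [set x | ((Nphi theta phi t x)%:R%:E <= NA (R:=R) theta A x)%E]) t
    @[t --> +oo] --> rho%:E.
Proof.
move=> [mtheta _] [mphi [c [c_gt0 phi_ge_c]]] [M phi_le_M] [mA _] survivor_rate.
split.
  apply: cvg_trans (cylinder_escape_rate mtheta mphi mA c_gt0 phi_ge_c phi_le_M _ survivor_rate).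
  apply: near_eq_cvg; apply: nearW => t.
  by rewrite /neglograte (Nphi_le_NA_cylinder theta _ c_gt0 phi_ge_c).
apply: cvg_trans (avoiders_escape_rate mtheta mphi mA c_gt0 phi_ge_c phi_le_M _ survivor_rate).
apply: near_eq_cvg; apply: nearW => t.
by rewrite /neglograte (Nphi_le_NA_set theta _ c_gt0 phi_ge_c).
Qed.
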